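(* Let $d_1<d_2<d_3$ be positive integers with $\gcd(d_1,d_2,d_3)=1$ forming a minimal generating set, and suppose $\mathsf S(d_1,d_2,d_3)$ is non-symmetric. Let $p(d_1,d_2,d_3)=\widetilde G(d_1,d_2,d_3)/C(d_1,d_2,d_3)$. Then $p(d_1,d_2,d_3)<1/2$, and moreover $p(d_1,d_2,d_3)=1/3$ if $(d_1,d_2,d_3)=(3,3k+1,3k+2)$ for some integer $k\ge1$, while $1/3<p(d_1,d_2,d_3)<1/2$ for every other such non-symmetric triple.
   Context: $\mathsf S(d_1,d_2,d_3)=\{c_1d_1+c_2d_2+c_3d_3: c_i\in\mathbb Z_{\ge0}\}$. The Frobenius number $F$ is the largest integer not in $\mathsf S$, the conductor is $C=F+1$, the genus $G$ is the number of positive integers not in $\mathsf S$, and $\widetilde G$ is the number of elements of $\mathsf S$ in $[0,F]$, so $G+\widetilde G=C$. The semigroup is symmetric if for every integer $s$: $s\in\mathsf S\iff F-s\notin\mathsf S$, and non-symmetric otherwise. *)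

From mathcomp Require Import all_boot all_order all_algebra.
Set Implicit Arguments. Unset Strict Implicit. Unset Printing Implicit Defensive.

(* Membership of s in S(d1,d2,d3) = { c1 d1 + c2 d2 + c3 d3 : ci >= 0 }.
   Boolean version: coefficients are bounded by s (for positive generators,
   c_i * d_i <= s forces c_i <= s). *)
Definition inS (d1 d2 d3 s : nat) : bool :=
  [exists c1 : 'I_s.+1, exists c2 : 'I_s.+1, exists c3 : 'I_s.+1,
     s == c1 * d1 + c2 * d2 + c3 * d3].

Definition inS2 (a b s : nat) : bool :=
  [exists c1 : 'I_s.+1, exists c2 : 'I_s.+1, s == c1 * a + c2 * b].

Definition minimal_gens (d1 d2 d3 : nat) : Prop :=
  ~~ inS2 d2 d3 d1 /\ ~~ inS2 d1 d3 d2 /\ ~~ inS2 d1 d2 d3.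

Definition is_frobenius (d1 d2 d3 : nat) (F : int) : Prop :=
  (forall s : nat, (F < s%:Z)%R -> inS d1 d2 d3 s) /\
  (0 <= F)%R /\ ~~ inS d1 d2 d3 `|F|%N.

Definition inSZ (d1 d2 d3 : nat) (s : int) : bool :=
  (0 <= s)%R && inS d1 d2 d3 `|s|%N.

Definition symmetric_sg (d1 d2 d3 : nat) (F : int) : Prop :=
  forall s : int, inSZ d1 d2 d3 s <-> ~~ inSZ d1 d2 d3 (F - s)%R.

Definition Gtilde (d1 d2 d3 F : nat) : nat :=
  count (inS d1 d2 d3) (iota 0 F.+1).

From mathcomp Require Import all_boot all_order all_algebra.
From mathcomp Require Import zify ring lra.
Set Implicit Arguments. Unset Strict Implicit. Unset Printing Implicit Defensive.

(* Write the generators as m < u < v.  The Apery set of m is the set of weights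
   a u + b v of the points (a, b) of a staircase in N^2.  Comparing the relations
   (a + 1) u + beta v = X m and gamma u + (b + 1) v = Y m available at a corner
   (a, b) yields an exchange c u = e v, which moves the corner to the left without
   changing its weight; hence all corners but the rightmost one have the same
   weight, S has at most one pseudo-Frobenius number f besides F, and every gap
   g <= F has F - g or f - g in S.  The reflections x |-> F - x and x |-> f - x
   then map S /\ [0, F] onto a cover of the gaps, so C <= 3 G~, while a gap s
   with F - s also a gap (non-symmetry) gives 2 G~ < C.  If C = 3 G~, the
   translates of S /\ [0, F] by 0, 1 and 2 tile [0, F], so S /\ [0, F] consists
   of the multiples of 3, which forces (d1, d2, d3) = (3, 3k + 1, 3k + 2). *)

Section Staircase.
Variables m u v : nat.
Hypotheses (m_gt0 : 0 < m) (u_gt0 : 0 < u) (v_gt0 : 0 < v).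
Local Notation S := (inS m u v).

Lemma inSP s : reflect (exists c1 c2 c3, s = c1 * m + c2 * u + c3 * v) (S s).
Proof.
apply: (iffP existsP) => [[c1 /existsP [c2 /existsP [c3 /eqP ->]]]|[c1 [c2 [c3 Es]]]].
  by exists c1, c2, c3.
have bound c d : 0 < d -> c * d <= s -> c < s.+1 by move=> d_gt0 le; rewrite ltnS; nia.
exists (Ordinal (bound c1 m m_gt0 ltac:(lia))); apply/existsP.
exists (Ordinal (bound c2 u u_gt0 ltac:(lia))); apply/existsP.
by exists (Ordinal (bound c3 v v_gt0 ltac:(lia))); rewrite /= Es.
Qed.

Lemma inS_comb c1 c2 c3 : S (c1 * m + c2 * u + c3 * v).
Proof. by apply/inSP; exists c1, c2, c3. Qed.

Lemma inS0 : S 0.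
Proof. exact: (inS_comb 0 0 0). Qed.

Lemma inSD x y : S x -> S y -> S (x + y).
Proof.
move=> /inSP [a1 [a2 [a3 ->]]] /inSP [b1 [b2 [b3 ->]]].
apply/inSP; exists (a1 + b1), (a2 + b2), (a3 + b3); lia.
Qed.

Definition weight a b := a * u + b * v.

(* [weight a b] is always in S; the point (a, b) lies in the staircase when this
   weight is in the Apery set of m, i.e. when subtracting m leaves S (the first
   disjunct guards against truncated subtraction). *)
Definition apery a b := (weight a b < m) || ~~ S (weight a b - m).

Definition corner a b := [&& apery a b, ~~ apery a.+1 b & ~~ apery a b.+1].

Lemma aperyPn a b : reflect (exists2 k, weight a b = m + k & S k) (~~ apery a b).
Proof.
rewrite /apery negb_or -leqNgt negbK.
apply: (iffP andP) => [[le_m Sk]|[k -> Sk]]; last by rewrite leq_addr addKn.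
by exists (weight a b - m); rewrite ?subnKC.
Qed.

Lemma apery_le a b a' b' : a <= a' -> b <= b' -> apery a' b' -> apery a b.
Proof.
move=> le_a le_b; apply: contraLR => /aperyPn [k Ew Sk]; apply/aperyPn.
exists (k + (0 * m + (a' - a) * u + (b' - b) * v)); last exact: inSD Sk (inS_comb _ _ _).
by move: Ew; rewrite /weight; nia.
Qed.

Lemma apery_weight a b a' b' : weight a b = weight a' b' -> apery a b = apery a' b'.
Proof. by rewrite /apery => ->. Qed.

Lemma apery_lt a b : apery a b -> a < m /\ b < m.
Proof.
have notA_m (a' b' : nat) d : 0 < d -> weight a' b' = m * d -> ~~ apery a' b'.
  move=> d_gt0 Ew; apply/aperyPn; exists ((d - 1) * m + 0 * u + 0 * v); last exact: inS_comb.
  by rewrite Ew; nia.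
move=> A; split; rewrite ltnNge; apply: contraL A => le_m.
  apply: contra (apery_le le_m (leq0n b)) _.
  by apply: (notA_m _ _ u u_gt0); rewrite /weight; lia.
apply: contra (apery_le (leq0n a) le_m) _.
by apply: (notA_m _ _ v v_gt0); rewrite /weight; lia.
Qed.

Lemma corner_right_relation a b b' : corner a b -> apery a.+1 b' ->
  exists beta X, [/\ b' < beta, beta <= b, 0 < X & a.+1 * u + beta * v = X * m].
Proof.
case/and3P=> Aab /aperyPn [k Ew /inSP [x [y [z Ek]]]] _ Ab'.
case: y Ek => [|y] Ek; last first.
  have : ~~ apery (a.+1 - y.+1) b.
    apply/aperyPn; exists (x * m + (y.+1 - a.+1) * u + z * v); last exact: inS_comb.
    by move: Ew; rewrite /weight Ek; nia.
  by rewrite (apery_le _ (leqnn b) Aab) //; lia.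
have notA : ~~ apery a.+1 (b - z).
  apply/aperyPn; exists (x * m + 0 * u + (z - b) * v); last exact: inS_comb.
  by move: Ew; rewrite /weight Ek; nia.
have lt_b' : b' < b - z.
  by rewrite ltnNge; apply: contra notA => le_b'; apply: apery_le Ab'.
exists (b - z), x.+1; split; rewrite ?leq_subr //.
by move: Ew; rewrite /weight Ek; nia.
Qed.

End Staircase.

Lemma inS_swap m u v s : inS m u v s = inS m v u s.
Proof.
apply/existsP/existsP => -[c1 /existsP [c2 /existsP [c3 /eqP Es]]];
  exists c1; apply/existsP; exists c3; apply/existsP; exists c2; apply/eqP; lia.
Qed.

Lemma apery_swap m u v a b : apery m u v a b = apery m v u b a.
Proof. by rewrite /apery /weight addnC inS_swap. Qed.

Lemma corner_swap m u v a b : corner m u v a b = corner m v u b a.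
Proof.
rewrite /corner (apery_swap m u v a) (apery_swap m u v a.+1) (apery_swap m u v a b.+1).
by rewrite [X in _ && X]andbC.
Qed.

Section Corners.
Variables m u v : nat.
Hypotheses (m_gt0 : 0 < m) (u_gt0 : 0 < u) (v_gt0 : 0 < v).
Local Notation S := (inS m u v).
Local Notation weight := (weight u v).
Local Notation apery := (apery m u v).
Local Notation corner := (corner m u v).
Local Notation inSP := (inSP m_gt0 u_gt0 v_gt0).
Local Notation inS_comb := (inS_comb m_gt0 u_gt0 v_gt0).
Local Notation apery_le := (apery_le m_gt0 u_gt0 v_gt0).
Local Notation apery_lt := (apery_lt m_gt0 u_gt0 v_gt0).

Lemma corner_apery a b : corner a b -> apery a b.
Proof. by case/and3P. Qed.

Lemma corner_left_relation a b a' : corner a b -> apery a' b.+1 ->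
  exists gamma Y, [/\ a' < gamma, gamma <= a, 0 < Y & gamma * u + b.+1 * v = Y * m].
Proof.
rewrite corner_swap apery_swap => cab Aa'.
have [g [Y [? ? ? E]]] := corner_right_relation m_gt0 v_gt0 u_gt0 cab Aa'.
by exists g, Y; split; rewrite // addnC.
Qed.

(* Comparing the two relations at a corner, the larger multiple of m would put
   a point below the corner outside the staircase. *)
Lemma corner_exchange a b a' b' : corner a b -> apery a.+1 b' -> apery a' b.+1 ->
  exists c e, [/\ 0 < c, c <= a, 0 < e, e <= b & c * u = e * v].
Proof.
move=> cab Ar Al; have Aab := corner_apery cab.
have [beta [X [lt_b' le_b _ EX]]] := corner_right_relation m_gt0 u_gt0 v_gt0 cab Ar.
have [gamma [Y [lt_a' le_a _ EY]]] := corner_left_relation cab Al.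
have notA (c e : nat) k : c <= a -> e <= b -> weight c e = m + k -> S k -> False.
  move=> le_c le_e Ew Sk; move: (apery_le le_c le_e Aab).
  by apply/negP/aperyPn; exists k.
have [A1 eA] : exists A1, a.+1 = gamma + A1 by exists (a.+1 - gamma); lia.
have [B1 eB] : exists B1, b.+1 = beta + B1 by exists (b.+1 - beta); lia.
rewrite eA mulnDl in EX; rewrite eB mulnDl in EY.
case: (ltngtP X Y) => [lt_XY|lt_YX|eq_XY].
- have [D eD] : exists D, Y = X + D.+1 by exists (Y - X).-1; lia.
  rewrite eD mulnDl mulSn in EY.
  exfalso; apply: (notA 0 B1 (D * m + A1 * u + 0 * v)); rewrite /weight ?inS_comb //; lia.
- have [D eD] : exists D, X = Y + D.+1 by exists (X - Y).-1; lia.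
  rewrite eD mulnDl mulSn in EX.
  exfalso; apply: (notA A1 0 (D * m + 0 * u + B1 * v)); rewrite /weight ?inS_comb //; lia.
- by exists A1, B1; split; lia.
Qed.

Lemma corner_shift a b c e : corner a b -> c <= a -> c * u = e * v ->
  corner (a - c) (b + e) /\ weight (a - c) (b + e) = weight a b.
Proof.
move=> /and3P [A1 A2 A3] le_c E.
have W x y : weight (a - c + x) (b + e + y) = weight (a + x) (b + y).
  have [a0 ->] : exists a0, a = a0 + c by exists (a - c); lia.
  by rewrite addnK /weight !mulnDl E; lia.
split; last by have := W 0 0; rewrite !addn0.
apply/and3P; split.
- by rewrite -[a - c]addn0 -[b + e]addn0 (apery_weight m (W 0 0)) !addn0.
- by rewrite -[b + e]addn0 -[(a - c).+1]addn1 (apery_weight m (W 1 0)) addn0 addn1.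
- by rewrite -[a - c]addn0 -[(b + e).+1]addn1 (apery_weight m (W 0 1)) addn0 addn1.
Qed.

Lemma corner_uniq a b b' : corner a b -> corner a b' -> b = b'.
Proof.
move=> /and3P [A _ nA] /and3P [A' _ nA'].
case: (ltngtP b b') => // [lt_bb'|lt_b'b].
- by move: (apery_le (leqnn a) lt_bb' A'); rewrite (negbTE nA).
- by move: (apery_le (leqnn a) lt_b'b A); rewrite (negbTE nA').
Qed.

Lemma corner_antimono a b a' b' : corner a b -> corner a' b' -> a < a' -> b' < b.
Proof.
move=> /and3P [_ nA _] /and3P [A' _ _] lt_a; rewrite ltnNge; apply: contra nA => le_b.
exact: apery_le lt_a le_b A'.
Qed.

Lemma apery_le_corner a b : apery a b -> exists a' b', [/\ a <= a', b <= b' & corner a' b'].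
Proof.
move=> A; move: {2}(m - a + (m - b)) (leqnn (m - a + (m - b))) => k.
elim: k a b A => [|k IH] a b A le_k.
  by have [? ?] := apery_lt A; lia.
case Ar: (apery a.+1 b).
  have [? ?] := apery_lt Ar.
  by have [a' [b' [? ? ?]]] := IH _ _ Ar ltac:(lia); exists a', b'; split => //; lia.
case Au: (apery a b.+1).
  have [? ?] := apery_lt Au.
  by have [a' [b' [? ? ?]]] := IH _ _ Au ltac:(lia); exists a', b'; split => //; lia.
by exists a, b; rewrite /corner A Ar Au.
Qed.

(* Exchanging along a relation c u = e v moves a corner strictly to the left
   without changing its weight, until it reaches the leftmost corner. *)
Lemma corner_weight_left aL bL aR bR : corner aL bL -> corner aR bR ->
    (forall a b, corner a b -> aL <= a <= aR) ->
  forall a b, corner a b -> a < aR -> weight a b = weight aL bL.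
Proof.
move=> cL cR range; elim/ltn_ind => a IH b cab lt_aR.
case/andP: (range a b cab); rewrite leq_eqVlt => /orP [/eqP eq_a|lt_aL] _.
  by subst a; rewrite (corner_uniq cab cL).
have Ar : apery a.+1 bR.
  by apply: apery_le (corner_apery cR) => //; exact: corner_antimono cab cR lt_aR.
have Al : apery aL b.+1.
  by apply: apery_le (corner_apery cL) => //; exact: corner_antimono cL cab lt_aL.
have [c [e [c_gt0 le_c _ _ E]]] := corner_exchange cab Ar Al.
have [cab' <-] := corner_shift cab le_c E.
by apply: IH cab' _; lia.
Qed.

Lemma corner_weights a0 b0 : corner a0 b0 -> exists a1 b1, corner a1 b1 /\
  forall a b, corner a b -> weight a b = weight a0 b0 \/ weight a b = weight a1 b1.
Proof.
move=> c0; pose P a := [exists b : 'I_m, corner a b].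
have PP a : reflect (exists b, corner a b) (P a).
  apply: (iffP existsP) => [[b cab]|[b cab]]; first by exists b.
  by have [_ lt_b] := apery_lt (corner_apery cab); exists (Ordinal lt_b).
have exP : exists a, P a by exists a0; apply/PP; exists b0.
have boundP a : P a -> a <= m.
  by case/PP => b /corner_apery/apery_lt [/ltnW].
case: (ex_minnP exP) => aL /PP [bL cL] minL.
case: (ex_maxnP exP boundP) => aR /PP [bR cR] maxR.
have range a b : corner a b -> aL <= a <= aR.
  by move=> cab; rewrite minL ?maxR //; apply/PP; exists b.
have leftW := corner_weight_left cL cR range.
have atR a b : corner a b -> ~~ (a < aR) -> a = aR /\ b = bR.
  move=> cab; rewrite -leqNgt => le_aR; have /andP [_ le_aR'] := range a b cab.
  have eq_a : a = aR by apply/eqP; rewrite eqn_leq le_aR le_aR'.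
  by subst a; rewrite (corner_uniq cab cR).
have [lt0|ge0] := boolP (a0 < aR).
  exists aR, bR; split => // a b cab; rewrite (leftW _ _ c0 lt0).
  have [lt|ge] := boolP (a < aR); first by left; exact: leftW.
  by right; case: (atR a b cab ge) => -> ->.
have [-> ->] := atR a0 b0 c0 ge0.
exists aL, bL; split => // a b cab.
have [lt|ge] := boolP (a < aR); first by right; exact: leftW.
by left; case: (atR a b cab ge) => -> ->.
Qed.

Lemma gap_under_corner N g : (forall s, N < s -> S s) -> ~~ S g -> g <= N ->
  exists a b, [/\ corner a b, g + m <= weight a b & S (weight a b - m - g)].
Proof.
move=> SN notSg le_gN.
have exP : exists k, S (g + k * m) by exists N.+1; apply: SN; nia.
case: (ex_minnP exP) => k Sk mink.
have notS j : j < k -> ~~ S (g + j * m).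
  by move=> lt_jk; apply: contraTN lt_jk => /mink; rewrite -leqNgt.
have k_gt0 : 0 < k by case: k Sk {mink notS} => [|//]; rewrite mul0n addn0 (negbTE notSg).
case/inSP: Sk => c1 [c2 [c3 Ek]].
case: c1 Ek => [|c1] Ek; last first.
  have := notS k.-1 ltac:(lia).
  suff -> : g + k.-1 * m = c1 * m + c2 * u + c3 * v by rewrite inS_comb.
  by move: Ek; nia.
have A : apery c2 c3.
  suff Ew : weight c2 c3 - m = g + k.-1 * m by rewrite /apery Ew orbC notS //; lia.
  by move: Ek; rewrite /weight mul0n add0n; nia.
have [a [b [le_a le_b cab]]] := apery_le_corner A.
have Ew : weight a b = g + m + (k.-1 * m + (a - c2) * u + (b - c3) * v).
  have [da ->] : exists da, a = c2 + da by exists (a - c2); lia.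
  have [db ->] : exists db, b = c3 + db by exists (b - c3); lia.
  have [j ek] : exists j, k = j.+1 by exists k.-1; lia.
  rewrite (addnC c2) (addnC c3) !addnK; move: Ek; rewrite /weight ek !mulnDl mulSn /=; lia.
exists a, b; split; rewrite // Ew ?leq_addr //.
by rewrite addnAC addnK addKn inS_comb.
Qed.

Lemma corner_gap a b : corner a b -> m <= weight a b -> ~~ S (weight a b - m).
Proof. by move=> /corner_apery /orP [lt_m le_m|//]; rewrite leqNgt lt_m in le_m. Qed.

Lemma gaps_cover N : (forall s, N < s -> S s) -> ~~ S N ->
  exists2 f, f <= N /\ ~~ S f &
    forall g, g <= N -> ~~ S g -> S (N - g) \/ (g <= f /\ S (f - g)).
Proof.
move=> SN notSN.
have [a0 [b0 [c0 le0 _]]] := gap_under_corner SN notSN (leqnn N).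
have W0 : weight a0 b0 - m = N.
  have notS0 : ~~ S (weight a0 b0 - m) by apply: corner_gap c0 _; lia.
  by case: (ltngtP (weight a0 b0 - m) N) => // [lt_N|/SN S0]; [lia | rewrite S0 in notS0].
have [a1 [b1 [c1 weights]]] := corner_weights c0.
(* f comes from the other corner weight; N is a dummy when that weight is below m. *)
exists (if m <= weight a1 b1 then weight a1 b1 - m else N).
  case: ifP => [le_m|_]; last by [].
  have notS1 := corner_gap c1 le_m; split => //.
  by rewrite leqNgt; apply: contra notS1; exact: SN.
move=> g le_gN notSg.
have [a [b [cab le_g Sg]]] := gap_under_corner SN notSg le_gN.
case: (weights a b cab) => Ew; rewrite Ew in le_g Sg.
  by left; rewrite -W0.
by right; rewrite ifT; [split=> //; lia | lia].
Qed.

End Corners.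

Section Counting.
Variables (S : pred nat) (N : nat).

Let T := [set x : 'I_N.+1 | S x].
Let R1 := [set x : 'I_N.+1 | S (N - x)].

Let card_R1 : #|R1| = #|T|.
Proof.
have -> : R1 = (@rev_ord N.+1) @^-1: T by apply/setP => x; rewrite !inE /= subSS.
by rewrite card_preimset //; exact: rev_ord_inj.
Qed.

Let card_gaps : #|~: T| = N.+1 - #|T|.
Proof. by rewrite cardsCs setCK card_ord. Qed.

Let card_T : #|T| <= N.+1.
Proof. by have := max_card T; rewrite card_ord. Qed.

Hypotheses (SD : forall x y, S x -> S y -> S (x + y)) (notSN : ~~ S N).

Let R1_gaps : R1 \subset ~: T.
Proof.
apply/subsetP => x; rewrite !inE => SNx; apply: contra notSN => Sx.
by rewrite -(subnKC (ltn_ord x : x <= N)); exact: SD.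
Qed.

Lemma card_sg_lt_half : (exists2 s, s <= N & ~~ S s && ~~ S (N - s)) ->
  2 * #|[set x : 'I_N.+1 | S x]| < N.+1.
Proof.
case=> s le_sN /andP [notSs notSNs]; pose s0 : 'I_N.+1 := inord s.
have : #|s0 |: R1| <= #|~: T|.
  apply: subset_leq_card; rewrite subUset R1_gaps andbT sub1set.
  by rewrite inE inE inordK.
by rewrite cardsU1 inE inordK // (negbTE notSNs) card_R1 card_gaps -/T; lia.
Qed.

Section Cover.
Variable f : nat.
Hypothesis le_fN : f <= N.
Hypothesis cover : forall g, g <= N -> ~~ S g -> S (N - g) \/ (g <= f /\ S (f - g)).

Let R2 := [set x : 'I_N.+1 | (x <= f) && S (f - x)].
Let Tf := [set x : 'I_N.+1 | S x && (x <= f)].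

Let card_R2 : #|R2| <= #|Tf|.
Proof.
pose h (x : 'I_N.+1) : 'I_N.+1 := inord (f - x).
apply: leq_trans (leq_imset_card h Tf); apply: subset_leq_card.
apply/subsetP => x; rewrite inE => /andP [le_xf Sfx]; apply/imsetP; exists (h x).
  by rewrite inE inordK ?Sfx ?leq_subr //; lia.
by apply: val_inj; rewrite /h /= !inordK; lia.
Qed.

Let card_Tf : #|Tf| <= #|T|.
Proof. by apply: subset_leq_card; apply/subsetP => x; rewrite !inE => /andP []. Qed.

Let gaps_sub : ~: T \subset R1 :|: R2.
Proof.
apply/subsetP => x; rewrite !inE => notSx.
by case: (cover (ltn_ord x) notSx) => [->|[-> ->]]; rewrite ?orbT.
Qed.

Let card_gaps_le : N.+1 - #|T| + #|R1 :&: R2| <= #|T| + #|Tf|.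
Proof.
have := subset_leq_card gaps_sub; have := cardsUI R1 R2.
by move: card_R1 card_R2 card_gaps; lia.
Qed.

Lemma card_sg_ge_third : N.+1 <= 3 * #|[set x : 'I_N.+1 | S x]|.
Proof. by move: card_gaps_le card_Tf card_T; rewrite -/T; lia. Qed.

Section Tight.
Hypotheses (S0 : S 0) (notS1 : ~~ S 1) (notSf : ~~ S f).
Hypothesis tight : N.+1 = 3 * #|T|.

Let tight_disjoint x : x <= N -> S (N - x) -> x <= f -> S (f - x) -> False.
Proof.
move=> le_xN SNx le_xf Sfx.
suff : 0 < #|R1 :&: R2| by move: card_gaps_le card_Tf; lia.
by rewrite card_gt0; apply/set0Pn; exists (inord x); rewrite !inE inordK ?SNx ?le_xf.
Qed.

Let tight_lt_f x : x <= N -> S x -> x < f.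
Proof.
move=> le_xN Sx; have TfT : Tf = T.
  apply/eqP; rewrite eqEcard; apply/andP; split.
    by apply/subsetP => y; rewrite !inE => /andP [].
  by move: card_gaps_le card_Tf card_T; lia.
have : inord x \in Tf by rewrite TfT inE inordK.
rewrite inE inordK // => /andP [_ le_xf].
by rewrite ltn_neqAle le_xf andbT; apply: contraNneq notSf => <-.
Qed.

Let N_gt0 : 0 < N.
Proof. by rewrite lt0n; apply: contraNneq notSN => ->. Qed.

Let tight_R2 x : x <= N -> (x <= f) && S (f - x) = ~~ S x && ~~ S (N - x).
Proof.
move=> le_xN; case Sx: (S x) => /=.
  by apply/negbTE/andP => -[le_xf Sfx]; move: (SD Sx Sfx); rewrite subnKC // (negbTE notSf).
case SNx: (S (N - x)) => /=.
  by apply/negbTE/andP => -[le_xf Sfx]; apply: tight_disjoint le_xN SNx le_xf Sfx.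
by case: (cover le_xN (negbT Sx)) => [SNx'|[-> ->] //]; rewrite SNx' in SNx.
Qed.

Let tight_f : f = N.-1.
Proof.
have lt_fN : f < N.
  rewrite ltn_neqAle le_fN andbT; apply/eqP => eq_f.
  by apply: (tight_disjoint (leqnn N)); rewrite ?eq_f ?subnn.
have notSN1 : ~~ S N.-1 by apply/negP => /(tight_lt_f (leq_pred N)); lia.
have := tight_R2 (leq_pred N); rewrite notSN1 (_ : N - N.-1 = 1) ?notS1; last lia.
by case/andP => ? _; lia.
Qed.

Let tight_shift1 x : x <= N -> (x <= f) && S (f - x) = (0 < x) && S x.-1.
Proof.
move=> le_xN.
have twin_sym : ~~ S x && ~~ S (N - x) = ~~ S (N - x) && ~~ S (N - (N - x)).
  by rewrite subKn // andbC.
rewrite tight_R2 // twin_sym -tight_R2 ?leq_subr // tight_f.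
case: x le_xN {twin_sym} => [|y] le_yN; first by rewrite subn0 leqNgt ltn_predL N_gt0.
have -> : N - y.+1 <= N.-1 by lia.
have -> : N.-1 - (N - y.+1) = y by lia.
by [].
Qed.

Let tight_shift2 x : x <= N -> S (N - x) = (1 < x) && S x.-2.
Proof.
case: x => [|y] le_yN; first by rewrite subn0 (negbTE notSN).
have := tight_shift1 (ltnW le_yN); rewrite tight_f.
have -> : y <= N.-1 by lia.
have -> : N.-1 - y = N - y.+1 by lia.
by [].
Qed.

Let tight_partition x : x <= N -> S x + ((0 < x) && S x.-1) + ((1 < x) && S x.-2) = 1.
Proof.
move=> le_xN; rewrite -tight_shift1 // -tight_shift2 // tight_R2 //.
case Sx: (S x) => /=; last by case: (S (N - x)).
suff -> : S (N - x) = false by [].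
by apply/negbTE; apply: contra notSN => SNx; rewrite -(subnKC le_xN); exact: SD.
Qed.

Let tight_periodic x : 3 <= x <= N -> S x = S (x - 3).
Proof.
case: x => [|[|[|y]]] // /andP [_ le_yN].
move: (tight_partition le_yN) (tight_partition (ltnW le_yN)) => /=; rewrite !subSS subn0.
by case: (S y.+3); case: (S y.+2); case: (S y.+1); case: (S y).
Qed.

Lemma sg_tight_mod3 x : x <= N -> S x = (3 %| x).
Proof.
elim/ltn_ind: x => x IH le_xN; case: (ltnP x 3) => [lt_x3|ge_x3].
  case: x lt_x3 le_xN {IH} => [|[|[|//]]] _ le_xN; rewrite ?S0 ?(negbTE notS1) //.
  by move: (tight_partition le_xN); rewrite /= S0 (negbTE notS1); case: (S 2).
rewrite tight_periodic ?ge_x3 // IH ?(leq_trans (leq_subr 3 x)) //; last lia.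
by rewrite -{2}(subnK ge_x3) dvdn_addl.
Qed.

End Tight.

End Cover.

End Counting.

Lemma count_iota_card (P : pred nat) k : count P (iota 0 k) = #|[set x : 'I_k | P x]|.
Proof.
by rewrite -sum1dep_card -(big_mkord P (fun=> 1)) -sum1_count /index_iota subn0.
Qed.

Lemma inS2_comb a b c1 c2 : 0 < a -> 0 < b -> inS2 a b (c1 * a + c2 * b).
Proof.
move=> a_gt0 b_gt0; set s := c1 * a + c2 * b.
have bound c d : 0 < d -> c * d <= s -> c < s.+1 by move=> d_gt0 le; rewrite ltnS; nia.
apply/existsP; exists (Ordinal (bound c1 a a_gt0 (leq_addr _ _))); apply/existsP.
by exists (Ordinal (bound c2 b b_gt0 (leq_addl _ _))).
Qed.

Definition extremal_triple (d1 d2 d3 : nat) : Prop :=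
  exists k : nat, 1 <= k /\ d1 = 3 /\ d2 = 3 * k + 1 /\ d3 = 3 * k + 2.

Lemma inS_extremal k x : 0 < k ->
  inS 3 (3 * k + 1) (3 * k + 2) x = (3 %| x) || (3 * k <= x).
Proof.
move=> k_gt0; have pos : 0 < 3 * k + 1 /\ 0 < 3 * k + 2 by lia.
apply/(inSP (isT : 0 < 3) pos.1 pos.2)/idP => [[c1 [c2 [c3 ->]]]|].
  have [/eqP|pos23] := posnP (c2 + c3); last by apply/orP; right; nia.
  by rewrite addn_eq0 => /andP [/eqP -> /eqP ->]; rewrite !mul0n !addn0 dvdn_mull.
case/orP => [/dvdnP [q ->]|le_kx]; first by exists q, 0, 0; rewrite !mul0n !addn0.
have [q [r [Ex lt_r3]]] : exists q r, x = q * 3 + r /\ r < 3.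
  by exists (x %/ 3), (x %% 3); rewrite -divn_eq ltn_mod.
case: r lt_r3 Ex => [|[|[|//]]] _ Ex.
- by exists q, 0, 0; lia.
- by exists (q - k), 1, 0; lia.
- by exists (q - k), 0, 1; lia.
Qed.

Lemma count_dvdn3 k : count (dvdn 3) (iota 0 (3 * k)) = k.
Proof.
elim: k => [//|k IH]; rewrite mulnSr iotaD count_cat IH add0n /=.
have d3k : 3 %| 3 * k := dvdn_mulr k (dvdnn 3).
by rewrite -[(3 * k).+2]addn2 -[(3 * k).+1]addn1 !(dvdn_addr _ d3k) d3k addn1.
Qed.

Lemma Gtilde_extremal d1 d2 d3 N : extremal_triple d1 d2 d3 ->
  (forall s, N < s -> inS d1 d2 d3 s) -> ~~ inS d1 d2 d3 N ->
  N.+1 = 3 * Gtilde d1 d2 d3 N.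
Proof.
case=> k [k_gt0 [-> [-> ->]]] SN notSN.
have eN : N.+1 = 3 * k.
  have lt_N : N < 3 * k by move: notSN; rewrite inS_extremal // negb_or -ltnNge => /andP [].
  have : ~~ inS 3 (3 * k + 1) (3 * k + 2) (3 * k).-1.
    by rewrite inS_extremal // negb_or -ltnNge; apply/andP; split; [apply/negP|]; lia.
  by apply: contraNeq => neq_N; apply: SN; lia.
rewrite /Gtilde eN; congr (3 * _); rewrite -[LHS](count_dvdn3 k).
apply: eq_in_count => x; rewrite mem_iota add0n => /andP [_ lt_x].
by rewrite inS_extremal // leqNgt lt_x orbF.
Qed.

Section Frobenius.
Variables d1 d2 d3 N : nat.
Hypotheses (d1_gt0 : 0 < d1) (d2_gt0 : 0 < d2) (d3_gt0 : 0 < d3).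
Hypotheses (SN : forall s, N < s -> inS d1 d2 d3 s) (notSN : ~~ inS d1 d2 d3 N).
Local Notation S := (inS d1 d2 d3).
Local Notation inSP := (inSP d1_gt0 d2_gt0 d3_gt0).
Local Notation inS_comb := (inS_comb d1_gt0 d2_gt0 d3_gt0).

Let SD x y : S x -> S y -> S (x + y). Proof. exact: inSD. Qed.

Let frobenius_cover : exists2 f, f <= N /\ ~~ S f &
  forall g, g <= N -> ~~ S g -> S (N - g) \/ (g <= f /\ S (f - g)).
Proof. exact: gaps_cover. Qed.

Lemma Gtilde_ge_third : N.+1 <= 3 * Gtilde d1 d2 d3 N.
Proof.
have [f [le_fN _] cover] := frobenius_cover.
by have := card_sg_ge_third SD notSN le_fN cover; rewrite /Gtilde count_iota_card.
Qed.

Lemma Gtilde_lt_half : (exists2 s, s <= N & ~~ S s && ~~ S (N - s)) ->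
  2 * Gtilde d1 d2 d3 N < N.+1.
Proof. by move/(card_sg_lt_half SD notSN); rewrite /Gtilde count_iota_card. Qed.

Hypotheses (lt_d12 : d1 < d2) (lt_d23 : d2 < d3) (min_gens : minimal_gens d1 d2 d3).

Let Sd1 : S d1. Proof. by have := inS_comb 1 0 0; rewrite mul1n !mul0n !addn0. Qed.
Let Sd2 : S d2. Proof. by have := inS_comb 0 1 0; rewrite mul1n !mul0n addn0. Qed.

Let inS_ge_d1 s : S s -> 0 < s -> d1 <= s.
Proof.
case/inSP => c1 [c2 [c3 ->]].
by case: c1 => [|c1]; [case: c2 => [|c2]; [case: c3 => [|c3] //|]|]; nia.
Qed.

Let d1_gt1 : 1 < d1.
Proof.
case: min_gens => _ [notS2 _]; rewrite ltn_neqAle d1_gt0 andbT.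
apply: contra notS2 => /eqP d1_1; have := inS2_comb d2 0 d1_gt0 d3_gt0.
by rewrite -d1_1 muln1 mul0n addn0.
Qed.

Let notS1 : ~~ S 1.
Proof. by apply/negP => /inS_ge_d1 /(_ isT); rewrite leqNgt d1_gt1. Qed.

Section Tight.
Variable n : nat.
Hypotheses (tight : N.+1 = 3 * n) (mod3 : forall x, x <= N -> S x = (3 %| x)).

Let tight_d1 : d1 = 3.
Proof.
have S3 : S 3 by case: (leqP 3 N) => [le_3N|/SN //]; rewrite mod3.
have := inS_ge_d1 S3 isT; case: (leqP d1 N) => [le_d1N|]; last lia.
by move: Sd1; rewrite mod3 // => /dvdnP [q]; lia.
Qed.

Let not_dvd3_d2 : ~~ (3 %| d2).
Proof.
case: min_gens => _ [notS2 _]; apply: contra notS2 => /dvdnP [q ->].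
by have := inS2_comb q 0 d1_gt0 d3_gt0; rewrite tight_d1 mul0n addn0.
Qed.

Let tight_d2 : d2 = 3 * n + 1.
Proof.
have lt_Nd2 : N < d2.
  by rewrite ltnNge; apply: contraL Sd2 => /mod3 ->; exact: not_dvd3_d2.
have /inSP [c1 [c2 [c3 E]]] : S (3 * n + 1) by apply: SN; lia.
have [|le_d2] : c2 + c3 = 0 \/ d2 <= 3 * n + 1 by case: c2 c3 E => [|c2] [|c3]; nia.
  move/eqP; rewrite addn_eq0 => /andP [/eqP c2_0 /eqP c3_0].
  by move: E; rewrite c2_0 c3_0 tight_d1; lia.
suff : d2 != 3 * n by lia.
by apply: contraNneq not_dvd3_d2 => ->; rewrite dvdn_mulr.
Qed.

Let tight_d3 : d3 = 3 * n + 2.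
Proof.
have /inSP [c1 [c2 [c3 E]]] : S (3 * n + 2) by apply: SN; lia.
move: E; rewrite tight_d1 tight_d2; case: c3 => [|c3] E; last by nia.
by case: c2 E => [|[|c2]] E; lia.
Qed.

Lemma tight_extremal : extremal_triple d1 d2 d3.
Proof. by exists n; split; [lia | rewrite tight_d1 tight_d2 tight_d3]. Qed.

End Tight.

Lemma Gtilde_third_extremal : N.+1 = 3 * Gtilde d1 d2 d3 N -> extremal_triple d1 d2 d3.
Proof.
move=> tight; apply: (tight_extremal tight).
have [f [le_fN notSf] cover] := frobenius_cover.
move: tight; rewrite /Gtilde count_iota_card.
exact: (sg_tight_mod3 SD notSN le_fN cover (inS0 d1_gt0 d2_gt0 d3_gt0) notS1 notSf).
Qed.

End Frobenius.

Import Order.TTheory GRing.Theory Num.Theory.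

Lemma twin_gap_of_nonsymmetric d1 d2 d3 N : 0 < d1 -> 0 < d2 -> 0 < d3 ->
  (forall s, N < s -> inS d1 d2 d3 s) -> ~~ inS d1 d2 d3 N -> ~ symmetric_sg d1 d2 d3 N ->
  exists2 s, s <= N & ~~ inS d1 d2 d3 s && ~~ inS d1 d2 d3 (N - s).
Proof.
move=> d1_gt0 d2_gt0 d3_gt0 SN notSN nsym.
have [/existsP [s twin]|/existsPn no_twin] :=
  boolP [exists s : 'I_N.+1, ~~ inS d1 d2 d3 s && ~~ inS d1 d2 d3 (N - s)].
  by exists s => //; rewrite -ltnS ltn_ord.
case: nsym => -[k|k]; rewrite /inSZ; last first.
  by rewrite NegzE opprK -PoszD /= SN //; lia.
case: (leqP k N) => [le_kN|lt_Nk]; last first.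
  have -> : (0 <= N%:Z - k%:Z)%R = false by apply/negbTE; rewrite -ltNge subr_lt0 ltz_nat.
  by rewrite /= SN.
rewrite subzn //=; split => [Sk|notSNk].
  by apply: contraL notSN => SNk; rewrite -(subnKC le_kN) inSD.
by have := no_twin (Ordinal (le_kN : k < N.+1)); rewrite /= notSNk andbT negbK.
Qed.

Section Ratios.
Variable R : realFieldType.

Lemma ratio_lt_half (n c : nat) : 2 * n < c -> (n%:R / c%:R < 1 / 2 :> R)%R.
Proof.
move=> lt_2n_c; have c_gt0 : (0 < c%:R :> R)%R by rewrite ltr0n; lia.
have : (n%:R * 2 < c%:R :> R)%R by rewrite -natrM ltr_nat; lia.
by rewrite ltr_pdivrMr //; lra.
Qed.

Lemma ratio_gt_third (n c : nat) : 0 < c -> c < 3 * n -> (1 / 3 < n%:R / c%:R :> R)%R.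
Proof.
move=> c_gt0 lt_c_3n; have c_gt0' : (0 < c%:R :> R)%R by rewrite ltr0n.
have : (c%:R < n%:R * 3 :> R)%R by rewrite -natrM ltr_nat; lia.
by rewrite ltr_pdivlMr //; lra.
Qed.

Lemma ratio_eq_third (n c : nat) : 0 < c -> c = 3 * n -> (n%:R / c%:R = 1 / 3 :> R)%R.
Proof.
move=> c_gt0 eq_c; have n_neq0 : (n%:R != 0 :> R)%R by rewrite pnatr_eq0 -lt0n; lia.
by rewrite eq_c natrM; field.
Qed.

End Ratios.

Unset Implicit Arguments.

Theorem mainTheorem3 (d1 d2 d3 : nat) (F : int) :
  (0 < d1)%N -> (d1 < d2)%N -> (d2 < d3)%N ->
  gcdn (gcdn d1 d2) d3 = 1%N ->
  minimal_gens d1 d2 d3 ->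
  is_frobenius d1 d2 d3 F ->
  ~ symmetric_sg d1 d2 d3 F ->
  let C := `|F|%N.+1 in
  let p : rat := ((Gtilde d1 d2 d3 `|F|%N)%:R / C%:R)%R in
  (p < 1 / 2)%R /\
  ((exists k : nat, (1 <= k)%N /\ d1 = 3%N /\ d2 = (3 * k + 1)%N /\ d3 = (3 * k + 2)%N) ->
     p = 1 / 3)%R /\
  (~ (exists k : nat, (1 <= k)%N /\ d1 = 3%N /\ d2 = (3 * k + 1)%N /\ d3 = (3 * k + 2)%N) ->
     (1 / 3 < p)%R /\ (p < 1 / 2)%R).
Proof.
(* The coprimality hypothesis is implied by the existence of the Frobenius number. *)
move=> d1_gt0 lt_d12 lt_d23 _ min_gens [SF [F_ge0 notSF]] nsym C p.
have [N eF] : exists N : nat, F = N by exists `|F|%N; rewrite gez0_abs.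
subst F; rewrite {}/p {}/C /= in notSF *.
have d2_gt0 : 0 < d2 by lia.
have d3_gt0 : 0 < d3 by lia.
have SN s : N < s -> inS d1 d2 d3 s by move=> lt_Ns; apply: SF; rewrite ltz_nat.
have half := Gtilde_lt_half d1_gt0 d2_gt0 d3_gt0 notSF
  (twin_gap_of_nonsymmetric d1_gt0 d2_gt0 d3_gt0 SN notSF nsym).
have third := Gtilde_ge_third d1_gt0 d2_gt0 d3_gt0 SN notSF.
split; first exact: ratio_lt_half.
split => [ext|not_ext].
  exact/ratio_eq_third/(Gtilde_extremal ext SN notSF).
split; last exact: ratio_lt_half.
apply: ratio_gt_third => //; rewrite ltn_neqAle third andbT.
apply/eqP => tight; apply: not_ext.
exact: Gtilde_third_extremal d1_gt0 d2_gt0 d3_gt0 SN notSF lt_d12 lt_d23 min_gens tight.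
Qed.
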